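(* (Endmarker lemma.) For any language $L$ in $\mathrm{1QFA}/n$ over an alphabet $\Sigma$, there exist a 1qfa $M$, a constant $\varepsilon\in[0,1/2)$, an advice alphabet $\Gamma$, and an advice function $h:\mathbb{N}\to\Gamma^*$ such that (i) $M$'s input tape has no endmarkers, (ii) $|h(n)|=n$ holds for every length $n\in\mathbb{N}$, and (iii) $\Pr_M\big[M(\genfrac{[}{]}{0pt}{}{x}{h(|x|)}) = L(x)\big]\geq 1-\varepsilon$ holds for every input string $x\in\Sigma^*$.
   Context: A 1qfa is a one-way measure-many quantum finite automaton $M=(Q,\Sigma,\{U_\sigma\}_{\sigma\in\Sigma\cup\{\cent,\$\}},q_0,Q_{acc},Q_{rej})$: the input $x$ is normally written as $\cent x\$$ between a left endmarker $\cent$ and a right endmarker $\$$, the head moves right one cell per step, at each step the unitary $U_\sigma$ for the scanned symbol $\sigma$ is applied to the current state and then a projection measurement onto the accepting, rejecting and non-halting subspaces is made; acceptance/rejection probabilities are accumulated over the steps. For two strings $x=x_1\cdots x_n\in\Sigma^n$, $y=y_1\cdots y_n\in\Gamma^n$ of equal length, $\genfrac{[}{]}{0pt}{}{x}{y}$ denotes the two-track string whose $i$th cell holds the pair symbol $\genfrac{[}{]}{0pt}{}{x_i}{y_i}$ (upper track $x_i$, lower track $y_i$), read simultaneously by the head. $L(x)$ denotes the characteristic function of $L$ ($1$ if $x\in L$, $0$ otherwise), and $M(\cdot)\in\{0,1\}$ is the (random) output (accept $=1$, reject $=0$). $\mathrm{1QFA}/n$ is the family of languages $L$ over $\Sigma$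 for which there exist a 1qfa $M$ (with both endmarkers), an error bound $\varepsilon\in[0,1/2)$, an advice alphabet $\Gamma$ and an advice function $h:\mathbb{N}\to\Gamma^*$ (not necessarily computable) with $|h(n)|=n$ such that $\Pr_M[M(\genfrac{[}{]}{0pt}{}{x}{h(|x|)})=L(x)]\geq1-\varepsilon$ for all $x\in\Sigma^*$. *)

From HB Require Import structures.
From mathcomp Require Import all_boot all_order all_algebra.
From mathcomp Require Import complex reals.
Set Implicit Arguments. Unset Strict Implicit. Unset Printing Implicit Defensive.
Import Order.TTheory GRing.Theory Num.Theory.
Local Open Scope ring_scope.

Inductive emk (A : Type) : Type := Cent | Dollar | Sym of A.
Arguments Cent {A}. Arguments Dollar {A}.

(* A 1qfa (measure-many) over tape alphabet A with amplitudes in R[i].  States are row vectors, one step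
   with symbol a maps psi to psi *m U a. *)
Record qfa (R : realType) (A : Type) := Qfa {
  qfa_n : nat;
  qfa_U : A -> 'M[R[i]]_qfa_n;
  qfa_q0 : 'I_qfa_n;
  qfa_acc : {set 'I_qfa_n};
  qfa_rej : {set 'I_qfa_n};
  qfa_unitary : forall a, qfa_U a *m (map_mx (@conjc R) (qfa_U a))^T = 1%:M;
  qfa_disj : [disjoint qfa_acc & qfa_rej]
}.

Section Semantics.
Variables (R : realType) (A : Type) (M : qfa R A).
Local Notation n := (qfa_n M).

Definition qfa_non : {set 'I_n} := ~: (qfa_acc M :|: qfa_rej M).

Definition projS (S : {set 'I_n}) (psi : 'rV[R[i]]_n) : 'rV[R[i]]_n :=
  \row_j (if j \in S then psi 0 j else 0).

Definition sqnorm (psi : 'rV[R[i]]_n) : R :=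
  \sum_j ((complex.Re (psi 0 j)) ^+ 2 + (complex.Im (psi 0 j)) ^+ 2).

Definition init_state : 'rV[R[i]]_n := \row_j (j == qfa_q0 M)%:R.

(* (total acceptance probability, total rejection probability) accumulated
   while reading w from (unnormalized) state psi.  When the tape is exhausted the remaining state is
   measured once more (this only matters for the empty tape). *)
Fixpoint run (psi : 'rV[R[i]]_n) (w : seq A) : R * R :=
  match w with
  | [::] => (sqnorm (projS (qfa_acc M) psi), sqnorm (projS (qfa_rej M) psi))
  | a :: w' =>
      let phi := psi *m qfa_U M a in
      let r := run (projS qfa_non phi) w' in
      (sqnorm (projS (qfa_acc M) phi) + r.1, sqnorm (projS (qfa_rej M) phi) + r.2)
  end.

Definition prob_out (w : seq A) (b : bool) : R :=
  if b then (run init_state w).1 else (run init_state w).2.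

End Semantics.

Definition with_endmarkers (A : Type) (w : seq A) : seq (emk A) :=
  Cent :: map (@Sym A) w ++ [:: Dollar].

Definition track (S G : Type) (x : seq S) (y : seq G) : seq (S * G) := zip x y.

Definition in_1QFAn (R : realType) (Sigma : finType) (L : seq Sigma -> bool) : Prop :=
  exists (Gamma : finType) (M : qfa R (emk (Sigma * Gamma))) (eps : R)
         (h : nat -> seq Gamma),
    [/\ 0 <= eps < 1 / 2,
        forall n, size (h n) = n &
        forall x : seq Sigma,
          prob_out M (with_endmarkers (track x (h (size x)))) (L x) >= 1 - eps].

From HB Require Import structures.
From mathcomp Require Import all_boot all_order all_algebra.
From mathcomp Require Import complex reals.
Set Implicit Arguments. Unset Strict Implicit. Unset Printing Implicit Defensive.
Import Order.TTheory GRing.Theory Num.Theory.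
Local Open Scope ring_scope.

(* The endmarked tape ¢ y $ of a nonempty input is cut into |y| blocks of one
   to three symbols, one block per letter; the advice records the shape of the
   letter's block.  The new machine reads a whole block in one step.  Since the
   old machine measures after every symbol, the amplitude that halts inside a
   block must be shielded from the remaining unitaries of that block: the new
   machine works on five copies of the old state space, and each step of a
   block moves the halting part of the live copy into a parking copy, where it
   waits, untouched, for the single measurement at the end of the block.  The
   empty input, on which no unitary is ever applied, is decided by the initial
   state itself, kept in a separate copy in which it is accepting or rejecting
   according to L(ε); the first symbol swaps it into the live copy. *)

Section Coordinates.
Variable R : realType.
Local Notation C := R[i].

Definition restr m (S : {set 'I_m}) (v : 'rV[C]_m) : 'rV[C]_m :=
  \row_j (if j \in S then v 0 j else 0).
Definition sqmod (z : C) : R := complex.Re z ^+ 2 + complex.Im z ^+ 2.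
Definition norm2 m (v : 'rV[C]_m) : R := \sum_j sqmod (v 0 j).
Definition unitary m (A : 'M[C]_m) := A *m (map_mx (@conjc R) A)^T = 1%:M.

Lemma projSE A (M : qfa R A) S v : @projS R A M S v = restr S v.
Proof. by []. Qed.

Lemma sqnormE A (M : qfa R A) v : @sqnorm R A M v = norm2 v.
Proof. by []. Qed.

Lemma restr0 m S : restr S (0 : 'rV[C]_m) = 0.
Proof. by apply/rowP => j; rewrite !mxE; case: ifP. Qed.

Lemma restr_id m (S T : {set 'I_m}) v : T \subset S -> restr S (restr T v) = restr T v.
Proof.
move=> /subsetP sTS; apply/rowP => j; rewrite !mxE.
by case: (boolP (j \in T)) => [/sTS ->|_]; last case: ifP.
Qed.

Lemma restr_sub m (S T : {set 'I_m}) v : S \subset T -> restr S (restr T v) = restr S v.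
Proof.
move=> /subsetP sST; apply/rowP => j; rewrite !mxE.
by case: (boolP (j \in S)) => [/sST ->|].
Qed.

Lemma restr_disjoint m (S T : {set 'I_m}) v :
  [disjoint S & T] -> restr S (restr T v) = 0.
Proof.
move=> dST; apply/rowP => j; rewrite !mxE.
by case: ifP => // jS; rewrite (disjointFr dST jS).
Qed.

Lemma norm20 m : norm2 (0 : 'rV[C]_m) = 0.
Proof. by rewrite /norm2 big1 // => j _; rewrite mxE /sqmod expr0n addr0. Qed.

Lemma norm2_restr m S (v : 'rV[C]_m) : norm2 (restr S v) = \sum_(j in S) sqmod (v 0 j).
Proof.
rewrite /norm2 [RHS]big_mkcond; apply: eq_bigr => j _; rewrite mxE.
by case: ifP => // _; rewrite /sqmod expr0n addr0.
Qed.

Lemma unitaryM m (A B : 'M[C]_m) : unitary A -> unitary B -> unitary (A *m B).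
Proof.
by move=> hA hB; rewrite /unitary map_mxM trmx_mul mulmxA -(mulmxA A) hB mulmx1 hA.
Qed.

Lemma unitary1 m : unitary (1%:M : 'M[C]_m).
Proof. by rewrite /unitary map_mx1 trmx1 mulmx1. Qed.

End Coordinates.

Section IndexedMatrices.
Variables (R : realType) (T : finType).
Local Notation C := R[i].
Local Notation N := #|{: T}|.

Definition vec_of (f : T -> C) : 'rV[C]_N := \row_j f (enum_val j).
Definition mx_of (F : T -> T -> C) : 'M[C]_N :=
  \matrix_(i, j) F (enum_val i) (enum_val j).

Lemma sum_enum_val (V : nmodType) (G : T -> V) :
  \sum_(j < N) G (enum_val j) = \sum_t G t.
Proof.
by rewrite -(big_enum_val (A := predT)); apply: eq_bigl => x; rewrite inE.
Qed.

Lemma eq_vec_of f g : f =1 g -> vec_of f = vec_of g.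
Proof. by move=> efg; apply/rowP => j; rewrite !mxE efg. Qed.

Lemma eq_mx_of F G : (forall s t, F s t = G s t) -> mx_of F = mx_of G.
Proof. by move=> eFG; apply/matrixP => i j; rewrite !mxE eFG. Qed.

Lemma mul_vec_of f F : vec_of f *m mx_of F = vec_of (fun t => \sum_s f s * F s t).
Proof.
apply/rowP => j; rewrite !mxE; under eq_bigr do rewrite !mxE.
by rewrite (sum_enum_val (fun s => f s * F s (enum_val j))).
Qed.

Lemma mul_mx_of F G : mx_of F *m mx_of G = mx_of (fun s t => \sum_u F s u * G u t).
Proof.
apply/matrixP => i j; rewrite !mxE; under eq_bigr do rewrite !mxE.
by rewrite (sum_enum_val (fun u => F (enum_val i) u * G u (enum_val j))).
Qed.

Lemma unitary_mx_of F :
  (forall s t, \sum_u F s u * conjc (F t u) = (s == t)%:R) -> unitary (mx_of F).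
Proof.
move=> hF; rewrite /unitary; have -> : (map_mx (@conjc R) (mx_of F))^T = mx_of (fun s t => conjc (F t s)).
  by apply/matrixP => i j; rewrite !mxE.
have -> : (1%:M : 'M[C]_N) = mx_of (fun s t => (s == t)%:R).
  by apply/matrixP => i j; rewrite !mxE (inj_eq enum_val_inj).
by rewrite mul_mx_of; apply: eq_mx_of.
Qed.

(* [relabel_mx tau] is the permutation matrix sending coordinate [tau t] to [t]. *)
Definition relabel_mx (tau : T -> T) := mx_of (fun s t => (s == tau t)%:R).

Lemma mul_vec_relabel f tau : vec_of f *m relabel_mx tau = vec_of (f \o tau).
Proof.
rewrite mul_vec_of; apply: eq_vec_of => t /=.
rewrite (bigD1 (tau t)) //= eqxx mulr1 big1 ?addr0 // => s /negbTE ->.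
by rewrite mulr0.
Qed.

Lemma unitary_relabel tau : injective tau -> unitary (relabel_mx tau).
Proof.
move=> tau_inj; apply: unitary_mx_of => s t.
transitivity (\sum_u (s == u)%:R * conjc ((t == u)%:R : C)).
  by rewrite [RHS](reindex_inj tau_inj).
rewrite (bigD1 s) //= eqxx mul1r conjc_nat big1 ?addr0; first by rewrite eq_sym.
by move=> u /negbTE; rewrite eq_sym => ->; rewrite mul0r.
Qed.

End IndexedMatrices.

Section Blocks.
Variables (R : realType) (K : finType) (n : nat).
Local Notation C := R[i].
Local Notation T := (K * 'I_n)%type.

Definition stack (g : K -> 'rV[C]_n) := vec_of (fun t : T => g t.1 0 t.2).
Definition blockdiag (W : K -> 'M[C]_n) :=
  mx_of (fun s t : T => (s.1 == t.1)%:R * W s.1 s.2 t.2).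
Definition blockset (S : K -> {set 'I_n}) : {set 'I_#|{: T}|} :=
  [set j | (enum_val j).2 \in S (enum_val j).1].

Lemma eq_stack g h : g =1 h -> stack g = stack h.
Proof. by move=> egh; apply: eq_vec_of => t; rewrite egh. Qed.

Lemma sum_pair (V : nmodType) (G : T -> V) : \sum_t G t = \sum_c \sum_q G (c, q).
Proof. by rewrite pair_bigA; apply: eq_bigr => -[]. Qed.

Lemma mul_stack_blockdiag g W : stack g *m blockdiag W = stack (fun c => g c *m W c).
Proof.
rewrite mul_vec_of; apply: eq_vec_of => -[c q] /=.
rewrite sum_pair (bigD1 c) //= [X in _ + X]big1 ?addr0; last first.
  by move=> e /negbTE ne; apply: big1 => p _ /=; rewrite ne mul0r mulr0.
by rewrite mxE; apply: eq_bigr => p _; rewrite eqxx mul1r.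
Qed.

Lemma unitary_blockdiag W : (forall c, unitary (W c)) -> unitary (blockdiag W).
Proof.
move=> hW; apply: unitary_mx_of => -[c q] [d r] /=.
rewrite sum_pair (bigD1 c) //= [X in _ + X]big1 ?addr0; last first.
  by move=> e /negbTE ne; apply: big1 => p _; rewrite eq_sym ne !mul0r.
under eq_bigr do rewrite eqxx mul1r rmorphM rmorph_nat.
have [<-|ne] := eqVneq c d; last first.
  by rewrite big1 ?xpair_eqE ?(negbTE ne) // => p _; rewrite mul0r mulr0.
rewrite xpair_eqE eqxx /=.
have := congr1 (fun A : 'M[C]_n => A q r) (hW c); rewrite !mxE => <-.
by apply: eq_bigr => p _; rewrite !mxE mul1r.
Qed.

Lemma restr_stack S g : restr (blockset S) (stack g) = stack (fun c => restr (S c) (g c)).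
Proof. by apply/rowP => j; rewrite !mxE inE. Qed.

Lemma norm2_stack g : norm2 (stack g) = \sum_c norm2 (g c).
Proof.
rewrite /norm2; under eq_bigr do rewrite mxE.
by rewrite (sum_enum_val (fun t : T => sqmod (g t.1 0 t.2))) sum_pair.
Qed.

End Blocks.

Local Notation copy k := (@Ordinal 5 k isT).

Definition delay_src (c : 'I_5) : 'I_5 :=
  match val c with 0 => copy 0 | 1 => copy 4 | 2 => copy 1 | 3 => copy 2 | _ => copy 3 end.
Definition swap01 (c : 'I_5) : 'I_5 :=
  match val c with 0 => copy 1 | 1 => copy 0 | _ => c end.

Lemma delay_src_inj : injective delay_src.
Proof.
move=> c d /(congr1 val) e; apply: val_inj; move: c d e.
by move=> [[|[|[|[|[|k]]]]] hk] [[|[|[|[|[|l]]]]] hl].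
Qed.

Lemma swap01_inj : injective swap01.
Proof.
move=> c d /(congr1 val) e; apply: val_inj; move: c d e.
by move=> [[|[|[|[|[|k]]]]] hk] [[|[|[|[|[|l]]]]] hl].
Qed.

Section BlockSimulation.
Variables (R : realType) (B : Type) (M : qfa R B).
Local Notation C := R[i].
Local Notation n := (qfa_n M).
Local Notation T := ('I_5 * 'I_n)%type.
Local Notation N := #|{: T}|.
Local Notation U := (qfa_U M).
Local Notation acc := (qfa_acc M).
Local Notation rej := (qfa_rej M).
Local Notation halt := (qfa_acc M :|: qfa_rej M).
Local Notation non := (qfa_non M).

Lemma disjoint_halt_non (S : {set 'I_n}) : S \subset halt -> [disjoint S & non].
Proof. by move=> sS; rewrite disjoints_subset setCK. Qed.

Lemma disjoint_non_halt : [disjoint non & halt].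
Proof. by rewrite disjoint_sym; apply: disjoint_halt_non. Qed.

Fixpoint halt_mass (S : {set 'I_n}) (psi : 'rV[C]_n) (u : seq B) : R :=
  if u is a :: u' then norm2 (restr S (psi *m U a)) + halt_mass S (restr non (psi *m U a)) u'
  else 0.
Fixpoint survivor (psi : 'rV[C]_n) (u : seq B) : 'rV[C]_n :=
  if u is a :: u' then survivor (restr non (psi *m U a)) u' else psi.

Lemma run_cat (psi : 'rV[C]_n) u w :
  run psi (u ++ w) = (halt_mass acc psi u + (run (survivor psi u) w).1,
                        halt_mass rej psi u + (run (survivor psi u) w).2).
Proof.
elim: u psi => [|a u IH] psi /=; first by rewrite !add0r; case: run.
by rewrite IH /= !addrA.
Qed.

Lemma restr_survivor psi u : (0 < size u)%N -> restr non (survivor psi u) = survivor psi u.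
Proof.
elim: u psi => [|a [|b u] IH] psi //= _; first by rewrite restr_id.
exact: IH.
Qed.

(* Copy 0 holds the initial state, copy 1 the live computation, and copies
   2, 3, 4 park the halting amplitude produced inside the current block. *)
Record copies := Copies { start : 'rV[C]_n; live : 'rV[C]_n;
  held1 : 'rV[C]_n; held2 : 'rV[C]_n; held3 : 'rV[C]_n }.

Definition copy_at (x : copies) (c : 'I_5) : 'rV[C]_n :=
  match val c with 0 => start x | 1 => live x | 2 => held1 x | 3 => held2 x | _ => held3 x end.

Local Notation embed x := (stack (copy_at x)).

Lemma restr_embed (S : 'I_5 -> {set 'I_n}) x :
  restr (blockset S) (embed x) =
  embed (Copies (restr (S (copy 0)) (start x)) (restr (S (copy 1)) (live x))
    (restr (S (copy 2)) (held1 x)) (restr (S (copy 3)) (held2 x)) (restr (S (copy 4)) (held3 x))).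
Proof.
rewrite restr_stack; apply: eq_stack => -[[|[|[|[|[|k]]]]] hk] //=.
all: by congr restr; congr S; apply: val_inj.
Qed.

Lemma norm2_embed x : norm2 (embed x) =
  norm2 (start x) + (norm2 (live x) + (norm2 (held1 x) + (norm2 (held2 x) + norm2 (held3 x)))).
Proof. by rewrite norm2_stack !big_ord_recl big_ord0 addr0. Qed.

Definition shift_halting (t : T) : T := if t.2 \in halt then (delay_src t.1, t.2) else t.
Definition swap_start (t : T) : T := (swap01 t.1, t.2).

Lemma shift_halting_inj : injective shift_halting.
Proof.
move=> [c q] [d r]; rewrite /shift_halting /=.
case: ifP => hq; case: ifP => hr -[e1 e2]; move: hq hr; rewrite e2 ?e1 => -> //.
by rewrite (delay_src_inj e1).
Qed.

Lemma swap_start_inj : injective swap_start.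
Proof. by move=> [c q] [d r] [/swap01_inj -> ->]. Qed.

Definition step_mx (a : B) : 'M[C]_N :=
  blockdiag (fun c : 'I_5 => if val c == 1%N then U a else 1%:M) *m relabel_mx R shift_halting.
Definition word_mx (u : seq B) : 'M[C]_N := foldr (fun a m => step_mx a *m m) 1%:M u.

Lemma unitary_word_mx u : unitary (word_mx u).
Proof.
elim: u => [|a u IH] /=; first exact: unitary1.
apply: unitaryM => //; apply: unitaryM; last exact/unitary_relabel/shift_halting_inj.
by apply: unitary_blockdiag => c; case: ifP => _; [apply: qfa_unitary | apply: unitary1].
Qed.

(* The parked amplitude moves 2 -> 3 -> 4; the halting part of copy 4 is sent
   back to copy 1 only to make the step a permutation, and [room] guarantees
   that copy 4 is empty whenever this happens within a block. *)
Definition step (a : B) (x : copies) : copies :=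
  Copies (start x) (restr non (live x *m U a) + restr halt (held3 x))
    (restr non (held1 x) + restr halt (live x *m U a))
    (restr non (held2 x) + restr halt (held1 x))
    (restr non (held3 x) + restr halt (held2 x)).
Definition steps (u : seq B) (x : copies) : copies := foldl (fun x a => step a x) x u.

Lemma embed_step a x : embed x *m step_mx a = embed (step a x).
Proof.
rewrite mulmxA mul_stack_blockdiag mul_vec_relabel; apply: eq_vec_of => -[c q].
rewrite /shift_halting /=; case: (boolP (q \in halt)) => hq; move: (hq); rewrite inE => hq';
  case: c => [[|[|[|[|[|k]]]]] hk] //=;
  by rewrite ?mulmx1 ?mxE ?inE ?hq' ?(negbTE hq') /= ?add0r ?addr0.
Qed.

Lemma embed_steps u x : embed x *m word_mx u = embed (steps u x).
Proof.
elim: u x => [|a u IH] x /=; first by rewrite mulmx1.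
by rewrite mulmxA embed_step IH.
Qed.

Definition parked x :=
  [/\ start x = 0, restr non (held1 x) = 0, restr non (held2 x) = 0 & restr non (held3 x) = 0].
Definition room (k : nat) x :=
  [/\ (3 <= k)%N -> held1 x = 0, (2 <= k)%N -> held2 x = 0 & (1 <= k)%N -> held3 x = 0].
Definition held_mass (S : {set 'I_n}) x :=
  norm2 (restr S (held1 x)) + norm2 (restr S (held2 x)) + norm2 (restr S (held3 x)).

Lemma held_mass_step (S : {set 'I_n}) a x : S \subset halt -> parked x -> held3 x = 0 ->
  held_mass S (step a x) = norm2 (restr S (live x *m U a)) + held_mass S x.
Proof.
move=> sS [_ h1 h2 h3] h3'.
by rewrite /held_mass /= h1 h2 h3 h3' !add0r !restr_sub // restr0 norm20 addr0 !addrA.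
Qed.

Lemma parked_step a x : parked x -> parked (step a x).
Proof.
case=> h0 h1 h2 h3; split; rewrite /= ?h0 ?h1 ?h2 ?h3 ?add0r //.
all: by apply: restr_disjoint; apply: disjoint_non_halt.
Qed.

Lemma room_step k a x : (k < 3)%N -> parked x -> room k.+1 x -> room k (step a x).
Proof.
move=> k3 [_ _ h2 h3] [r1 r2 r3]; split=> hk; first by rewrite ltnNge hk in k3.
- by rewrite /= h2 add0r r1 ?restr0.
- by rewrite /= h3 add0r r2 ?restr0.
Qed.

Lemma steps_spec u x : (size u <= 3)%N -> parked x -> room (size u) x ->
  [/\ parked (steps u x), live (steps u x) = survivor (live x) u &
      forall S : {set 'I_n}, S \subset halt ->
        held_mass S (steps u x) = halt_mass S (live x) u + held_mass S x].
Proof.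
elim: u x => [|a u IH] x /=; first by move=> _ px _; split=> // S _; rewrite add0r.
move=> hs px rx; have h3 : held3 x = 0 by case: rx => _ _ ->.
have [py ly my] := IH (step a x) (ltnW hs) (parked_step a px) (room_step a hs px rx).
have live_step : live (step a x) = restr non (live x *m U a) by rewrite /= h3 restr0 addr0.
split=> // [|S sS]; first by rewrite ly live_step.
by rewrite my // (held_mass_step a sS px h3) live_step addrCA addrA.
Qed.

Definition at_start (psi : 'rV[C]_n) := Copies psi 0 0 0 0.
Definition at_live (psi : 'rV[C]_n) := Copies 0 psi 0 0 0.

Lemma parked_at_live psi : parked (at_live psi).
Proof. by split; rewrite /= ?restr0. Qed.

Lemma room_at_live k psi : room k (at_live psi).
Proof. by []. Qed.

Lemma held_mass_at_live S psi : held_mass S (at_live psi) = 0.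
Proof. by rewrite /held_mass /= restr0 norm20 !addr0. Qed.

Variables (A : Type) (blk : A -> seq B) (isfirst : A -> bool) (b0 : bool).

Definition block_mx (b : A) : 'M[C]_N :=
  (if isfirst b then relabel_mx R swap_start else 1%:M) *m word_mx (blk b).

Lemma unitary_block_mx b : unitary (block_mx b).
Proof.
apply: unitaryM; last exact: unitary_word_mx.
by case: isfirst; [apply/unitary_relabel/swap_start_inj | apply: unitary1].
Qed.

Lemma embed_block b psi :
  embed (if isfirst b then at_start psi else at_live psi) *m block_mx b =
  embed (steps (blk b) (at_live psi)).
Proof.
rewrite mulmxA -embed_steps; congr (_ *m _); case: isfirst; last exact: mulmx1.
by rewrite mul_vec_relabel; apply: eq_vec_of => -[[[|[|[|[|[|k]]]]] hk] q].
Qed.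

(* Copy 0 only ever holds the initial state, which is halting with the
   verdict [b0] on the empty word. *)
Definition halting_copy (S : {set 'I_n}) (b : bool) (c : 'I_5) : {set 'I_n} :=
  if val c == 0%N then (if b then [set qfa_q0 M] else set0) else S.

Lemma disjoint_halting_copies :
  [disjoint blockset (halting_copy acc b0) & blockset (halting_copy rej (~~ b0))].
Proof.
rewrite -setI_eq0; apply/eqP/setP => j; rewrite !inE /halting_copy.
case: (enum_val j) => c q /=; case: ifP => _; first by case: b0; rewrite ?inE ?andbF.
by have := qfa_disj M; rewrite -setI_eq0 => /eqP/setP/(_ q); rewrite !inE.
Qed.

Definition block_qfa : qfa R A :=
  Qfa (enum_rank (copy 0, qfa_q0 M)) unitary_block_mx disjoint_halting_copies.

Lemma norm2_halting_copy S b x : start x = 0 ->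
  norm2 (restr (blockset (halting_copy S b)) (embed x)) =
  norm2 (restr S (live x)) + held_mass S x.
Proof.
by move=> h0; rewrite restr_embed norm2_embed /= h0 restr0 norm20 add0r !addrA.
Qed.

Lemma restr_non_embed x : parked x ->
  restr (qfa_non block_qfa) (embed x) = embed (at_live (restr non (live x))).
Proof.
have -> : qfa_non block_qfa =
    blockset (fun c => ~: (halting_copy acc b0 c :|: halting_copy rej (~~ b0) c)).
  by apply/setP => j; rewrite !inE.
by case=> h0 h1 h2 h3; rewrite restr_embed /= h0 h1 h2 h3 restr0.
Qed.

Lemma run_block_qfa b w psi : (0 < size (blk b) <= 3)%N ->
  @run R A block_qfa (embed (if isfirst b then at_start psi else at_live psi)) (b :: w) =
  (halt_mass acc psi (blk b) + (@run R A block_qfa (embed (at_live (survivor psi (blk b)))) w).1,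
   halt_mass rej psi (blk b) + (@run R A block_qfa (embed (at_live (survivor psi (blk b)))) w).2).
Proof.
case/andP=> size_gt0 size_le3.
have [py ly my] := steps_spec size_le3 (parked_at_live psi) (room_at_live _ psi).
set y := steps (blk b) (at_live psi) in py ly my.
have h0 : start y = 0 by case: py.
have halted_live (S : {set 'I_n}) : S \subset halt -> restr S (live y) = 0.
  by move=> sS; rewrite ly -(restr_survivor _ size_gt0) restr_disjoint ?disjoint_halt_non.
rewrite [LHS]/= embed_block -/y !projSE !sqnormE !norm2_halting_copy //.
rewrite restr_non_embed // (halted_live acc) ?subsetUl // (halted_live rej) ?subsetUr //.
rewrite my ?subsetUl // [held_mass rej y]my ?subsetUr // !held_mass_at_live.
by rewrite norm20 !add0r !addr0 ly restr_survivor.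
Qed.

Hypothesis blk_size : forall b, (0 < size (blk b) <= 3)%N.

Lemma run_at_live w psi : all (predC isfirst) w ->
  @run R A block_qfa (embed (at_live psi)) w = run psi (flatten (map blk w)).
Proof.
elim: w psi => [|b w IH] psi.
  move=> _ /=; rewrite !projSE !sqnormE !norm2_halting_copy //.
  by rewrite !held_mass_at_live !addr0.
case/andP=> /negbTE first_b all_w; have := run_block_qfa w psi (blk_size b).
by rewrite first_b => ->; rewrite IH // run_cat.
Qed.

Lemma run_at_start b w psi : isfirst b -> all (predC isfirst) w ->
  @run R A block_qfa (embed (at_start psi)) (b :: w) = run psi (flatten (map blk (b :: w))).
Proof.
move=> first_b all_w; have := run_block_qfa w psi (blk_size b).
by rewrite first_b => ->; rewrite run_at_live // run_cat.
Qed.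

Lemma init_block_qfa : init_state block_qfa = embed (at_start (init_state M)).
Proof.
apply/rowP => j; rewrite !mxE -(inj_eq enum_val_inj) enum_rankK.
by case: (enum_val j) => -[[|[|[|[|[|k]]]]] hk] q //=; rewrite mxE.
Qed.

Lemma prob_out_block_qfa b w v : isfirst b -> all (predC isfirst) w ->
  prob_out block_qfa (b :: w) v = prob_out M (flatten (map blk (b :: w))) v.
Proof. by move=> first_b all_w; rewrite /prob_out init_block_qfa run_at_start. Qed.

Lemma prob_out_block_qfa_nil : prob_out block_qfa [::] b0 = 1.
Proof.
rewrite /prob_out init_block_qfa /= !projSE !sqnormE !restr_embed !norm2_embed /=.
rewrite !restr0 !norm20 !addr0 /halting_copy /=.
by case: b0; rewrite /= norm2_restr big_set1 mxE eqxx /sqmod /= expr1n expr0n addr0.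
Qed.

End BlockSimulation.

Section Packing.
Variables Sigma Gamma : Type.
Local Notation tape := (seq (emk (Sigma * Gamma))).

(* Tags: 0 = the whole word [¢ a $], 1 = first letter [¢ a],
   2 = inner letter [a], 3 = last letter [a $]. *)
Definition unpack (b : Sigma * (Gamma * 'I_4)) : tape :=
  let: (s, (g, t)) := b in
  match val t with
  | 0 => [:: Cent; Sym (s, g); Dollar]
  | 1 => [:: Cent; Sym (s, g)]
  | 2 => [:: Sym (s, g)]
  | _ => [:: Sym (s, g); Dollar]
  end.

Definition starts_tape (b : Sigma * (Gamma * 'I_4)) : bool := (val b.2.2 <= 1)%N.

Local Notation tag k := (@Ordinal 4 k isT).

Definition tags (n : nat) : seq 'I_4 :=
  match n with
  | 0 => [::]
  | 1 => [:: tag 0]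
  | m.+2 => tag 1 :: nseq m (tag 2) ++ [:: tag 3]
  end.

Lemma size_tags n : size (tags n) = n.
Proof. by case: n => [|[|m]] //=; rewrite size_cat size_nseq addn1. Qed.

Lemma size_unpack b : (0 < size (unpack b) <= 3)%N.
Proof. by case: b => s [g [[|[|[|[|k]]]] hk]]. Qed.

Lemma unpack_inner m (x : seq Sigma) (g : seq Gamma) :
  size x = m.+1 -> size g = m.+1 ->
  all (predC starts_tape) (zip x (zip g (nseq m (tag 2) ++ [:: tag 3]))) /\
  flatten (map unpack (zip x (zip g (nseq m (tag 2) ++ [:: tag 3])))) =
    map (@Sym _) (zip x g) ++ [:: Dollar].
Proof.
elim: m x g => [|m IH] [|s x] [|c g] //= [hx] [hg].
  by case: x hx => // _; case: g hg.
by have [all_w ->] := IH x g hx hg.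
Qed.

Lemma unpack_tags (s : Sigma) (x : seq Sigma) (c : Gamma) (g : seq Gamma) :
  size x = size g ->
  exists b w, [/\ zip (s :: x) (zip (c :: g) (tags (size x).+1)) = b :: w,
    starts_tape b, all (predC starts_tape) w &
    flatten (map unpack (b :: w)) = with_endmarkers (zip (s :: x) (c :: g))].
Proof.
case: x g => [|s' x] [|c' g] //= e; first by eexists; eexists.
have [all_w flat_w] := @unpack_inner (size x) (s' :: x) (c' :: g) erefl (esym e).
by eexists; eexists; split; [reflexivity | | | rewrite /= flat_w].
Qed.

End Packing.

Unset Implicit Arguments.

Theorem lemma3p2 (R : realType) (Sigma : finType) (L : seq Sigma -> bool) :
  in_1QFAn R L ->
  exists (Gamma : finType) (M : qfa R (Sigma * Gamma)) (eps : R)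
         (h : nat -> seq Gamma),
    [/\ 0 <= eps < 1 / 2,
        forall n, size (h n) = n &
        forall x : seq Sigma,
          prob_out M (track x (h (size x))) (L x) >= 1 - eps].
Proof.
move=> [Gamma [M [eps [h [eps_bound size_h correct]]]]].
exists (Gamma * 'I_4)%type,
  (block_qfa M (@unpack Sigma Gamma) (@starts_tape Sigma Gamma) (L [::])), eps,
  (fun n => zip (h n) (tags n)).
split=> // [n|[|s x]]; first by rewrite size_zip size_h size_tags minnn.
  rewrite /track (_ : zip _ _ = [::]) ?prob_out_block_qfa_nil; last by case: (h 0).
  by case/andP: eps_bound => eps_ge0 _; rewrite lerBlDr lerDl.
have := correct (s :: x); have := size_h (size x).+1; rewrite /track /=.
case: (h (size x).+1) => [|c g] //= [/esym size_g].
have [b [w [-> first_b all_w unpack_w]]] := unpack_tags s c size_g.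
by rewrite prob_out_block_qfa // ?unpack_w //; apply: size_unpack.
Qed.
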